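(* A pure qubit state $\rho_\psi=|\psi\rangle\langle\psi|$, $|\psi\rangle\in\mathbb{C}^2$, is coherence-distillable (i.e. $C_d(\rho_\psi)>0$) if and only if $F_c(\rho_\psi)>\frac12$.
   Context: Coherence is taken with respect to the computational basis $\{|0\rangle,|1\rangle\}$; incoherent states are those diagonal in this basis, and incoherent operations are quantum channels admitting Kraus operators $K_i$ each mapping incoherent states to (multiples of) incoherent states. The set of maximally coherent qubit states is $\mathcal{M}=\{\frac{1}{\sqrt2}(e^{\mathfrak{i}\theta_0}|0\rangle+e^{\mathfrak{i}\theta_1}|1\rangle):\theta_0,\theta_1\in[0,2\pi]\}$, and the coherence fraction is $F_c(\rho)=\max_{|\phi\rangle\in\mathcal{M}}\langle\phi|\rho|\phi\rangle$. The distillable coherence $C_d(\rho)$ is the supremum of achievable rates $R=m/n$ such that, asymptotically as $n\to\infty$ and with error $\epsilon\to0$, $m$ copies of $|\phi_2\rangle=\frac{1}{\sqrt2}(|0\rangle+|1\rangle)$ can be obtained from $n$ copies of $\rho$ by incoherent operations. A state is called distillable if $C_d(\rho)>0$. *)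

From HB Require Import structures.
From mathcomp Require Import all_boot all_order all_algebra.
From mathcomp Require Import all_classical all_reals all_analysis.
From mathcomp Require Import complex.
Set Implicit Arguments. Unset Strict Implicit. Unset Printing Implicit Defensive.
Import Order.TTheory GRing.Theory Num.Theory.
Local Open Scope ring_scope.
Local Open Scope classical_set_scope.
Local Open Scope complex_scope.
Import numFieldNormedType.Exports.

Section Coherence.
Variable R : realType.
Local Notation C := R[i].

Definition adj (m n : nat) (A : 'M[C]_(m, n)) : 'M[C]_(n, m) :=
  (map_mx (@Num.conj C) A)^T.

(* positive semidefinite (over C, 0 <= z means z real and nonnegative) *)
Definition psd (d : nat) (A : 'M[C]_d) : Prop :=
  forall v : 'cV[C]_d, 0 <= (adj v *m A *m v) 0 0.

Definition density (d : nat) (A : 'M[C]_d) : Prop := psd A /\ \tr A = 1.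

Definition incoherent_state (d : nat) (A : 'M[C]_d) : Prop :=
  density A /\ is_diag_mx A.

Definition incoherent_kraus (d d' : nat) (K : 'M[C]_(d', d)) : Prop :=
  forall s : 'M[C]_d, incoherent_state s ->
    exists (c : C) (t : 'M[C]_d'), incoherent_state t /\ K *m s *m adj K = c *: t.

Definition incoherent_operation (d d' : nat) (ks : seq 'M[C]_(d', d)) : Prop :=
  \sum_(K <- ks) adj K *m K = 1%:M /\ (forall K, K \in ks -> incoherent_kraus K).

Definition apply_kraus (d d' : nat) (ks : seq 'M[C]_(d', d)) (A : 'M[C]_d)
  : 'M[C]_d' := \sum_(K <- ks) K *m A *m adj K.

Definition qbit (n : nat) (k : nat) (i : 'I_(2 ^ n)) : 'I_2 :=
  inord (odd (i %/ 2 ^ k)).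

Definition tens_pow (n : nat) (A : 'M[C]_2) : 'M[C]_(2 ^ n) :=
  \matrix_(i, j) \prod_(k < n) A (qbit k i) (qbit k j).

Definition phi2 : 'cV[C]_2 := \col_(i < 2) ((Num.sqrt (2 : R))^-1)%:C.
Definition phi2_proj : 'M[C]_2 := phi2 *m adj phi2.

Definition expi (t : R) : C := Complex (cos t) (sin t).
Definition max_coh (t0 t1 : R) : 'cV[C]_2 :=
  \col_(i < 2) (((Num.sqrt (2 : R))^-1)%:C * expi (if i == 0 then t0 else t1)).

Definition coherence_fraction (rho : 'M[C]_2) : R :=
  sup [set x : R | exists t0 t1 : R,
      t0 \in `[0, 2 * pi]%R /\ t1 \in `[0, 2 * pi]%R /\
      x = complex.Re ((adj (max_coh t0 t1) *m rho *m max_coh t0 t1) 0 0)].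

Definition achievable_rate (rho : 'M[C]_2) (r : R) : Prop :=
  exists (m : nat -> nat) (L : forall n : nat, seq 'M[C]_(2 ^ m n, 2 ^ n)),
    (forall n, incoherent_operation (L n)) /\
    ((fun n : nat => (m n)%:R / n%:R : R) @ \oo --> r) /\
    ((fun n : nat => 1 - complex.Re
        (\tr (tens_pow (m n) phi2_proj *m apply_kraus (L n) (tens_pow n rho))))
       @ \oo --> (0 : R)).

Definition distillable_coherence (rho : 'M[C]_2) : \bar R :=
  ereal_sup [set (r%:E)%E | r in achievable_rate rho].

Definition distillable (rho : 'M[C]_2) : Prop :=
  (0 < distillable_coherence rho)%E.

End Coherence.

(* If one amplitude of psi vanishes, every tensor power of |psi><psi| is diagonal;
   incoherent operations keep it diagonal, and a diagonal state of trace one has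
   fidelity exactly 2^-m with |phi_2>^{(x) m}, so fidelity tending to 1 forces m = 0
   eventually and every achievable rate is 0.  The overlap of psi = (a, b) with the
   maximally coherent state of phases (t0, t1) is 1/2 + Re(e^{i(t1 - t0)} a conj(b)),
   which is 1/2 when ab = 0 and exceeds 1/2 for one of the phase pairs built from
   0, pi/2, pi otherwise.

   For ab <> 0, the amplitude of psi^{(x) n} on a basis string only depends on its
   Hamming weight.  Cutting each weight class into chunks of 2^m strings and sending
   each chunk onto the m-qubit basis is an incoherent operation that maps every full
   chunk to a multiple of |phi_2>^{(x) m}; its infidelity is at most the weight of the
   strings outside full chunks.  There are at most (n + 1) 2^m of them, each of weight
   at most p^n with p = max(|a|^2, |b|^2) < 1, so with m = n / k and p^k <= 1/8 the
   infidelity is O(k^2 / n) and 1/k is an achievable rate. *)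

From HB Require Import structures.
From mathcomp Require Import all_boot all_order all_algebra.
From mathcomp Require Import all_classical all_reals all_analysis.
From mathcomp Require Import complex.
From mathcomp Require Import ring lra zify.
Set Implicit Arguments. Unset Strict Implicit. Unset Printing Implicit Defensive.
Import Order.TTheory GRing.Theory Num.Theory.
Import numFieldNormedType.Exports.
Local Open Scope ring_scope.
Local Open Scope classical_set_scope.

Lemma eq_from_bits n i j : (i < 2 ^ n)%N -> (j < 2 ^ n)%N ->
  (forall k, (k < n)%N -> odd (i %/ 2 ^ k) = odd (j %/ 2 ^ k)) -> i = j.
Proof.
elim: n i j => [|n IH] i j.
  by rewrite expn0 !ltnS !leqn0 => /eqP -> /eqP ->.
move=> lt_i lt_j eq_bits.
have eq_odd : odd i = odd j by have := eq_bits 0%N isT; rewrite expn0 !divn1.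
have eq_half : (i %/ 2 = j %/ 2)%N.
  apply: IH; rewrite ?ltn_divLR -?expnSr // => k lt_k.
  by rewrite -!divnMA -expnS; apply: eq_bits.
by rewrite -(ssrnat.odd_double_half i) -(ssrnat.odd_double_half j) eq_odd -!divn2 eq_half.
Qed.

Lemma sum_prod_bits (T : comPzSemiRingType) n (f : nat -> bool -> T) :
  \sum_(i < 2 ^ n) \prod_(k < n) f k (odd (i %/ 2 ^ k)) =
  \prod_(k < n) (f k false + f k true).
Proof.
elim: n => [|n IH]; first by rewrite expn0 big_ord1 !big_ord0.
have -> : (2 ^ n.+1 = 2 ^ n + 2 ^ n)%N by rewrite expnS mul2n addnn.
rewrite big_split_ord /= big_ord_recr /= mulrDr -IH !big_distrl /=.
congr (_ + _); apply: eq_bigr => i _; rewrite big_ord_recr /=.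
  by rewrite [(i %/ 2 ^ n)%N]divn_small.
congr (_ * _); last by rewrite divnDl ?dvdnn // divnn expn_gt0 divn_small.
apply: eq_bigr => k _.
rewrite divnDl ?dvdn_exp2l 1?ltnW // -expnB ?(ltnW (ltn_ord k)) //.
by rewrite ssrnat.oddD oddX subn_eq0 leqNgt ltn_ord.
Qed.

Lemma sum_ord2 (V : nmodType) (F : 'I_2 -> V) : \sum_(b < 2) F b = F 0 + F 1.
Proof. by rewrite big_ord_recl big_ord1; congr (_ + F _); apply: val_inj. Qed.

Lemma ord2_eq_of_neq (b x y : 'I_2) : x != b -> y != b -> x = y.
Proof.
by case: b => [[|[|b]] ?]; case: x => [[|[|x]] ?]; case: y => [[|[|y]] ?] //= _ _;
  apply: val_inj.
Qed.

Lemma ord2_cases (b : 'I_2) : b = 0 \/ b = 1.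
Proof. by case: b => [[|[|]]] // ?; [left|right]; apply: val_inj. Qed.

Lemma expn2_gt0 k : (0 < 2 ^ k)%N.
Proof. by rewrite expn_gt0. Qed.

Lemma expn_poly_le_geom n k : (0 < k)%N ->
  (n.+1 * 2 ^ (n %/ k) * n.+1 <= 2 * (k * k) * 8 ^ (n %/ k))%N.
Proof.
move=> k_gt0; set q := (n %/ k)%N.
have n_lt : (n.+1 <= k * q.+1)%N by rewrite {1}(divn_eq n k) mulnS addnC; have := ltn_pmod n k_gt0; lia.
have q_lt : (q.+1 <= 2 ^ q)%N by apply: ltn_expl.
have -> : (8 ^ q = 2 ^ q * 2 ^ q * 2 ^ q)%N by rewrite -!expnMn.
apply: (@leq_trans ((k * q.+1) * (k * q.+1) * 2 ^ q)).
  by rewrite mulnAC leq_mul2r leq_mul ?orbT.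
rewrite mulnACA; apply: (@leq_trans (k * k * (2 ^ q * 2 ^ q) * 2 ^ q)).
  by rewrite leq_mul2r leq_mul2l leq_mul ?orbT.
by rewrite -!mulnA leq_pmull.
Qed.

Lemma sum_eq_natr_mul (V : pzSemiRingType) (T : finType) (x : T) (F : T -> V) :
  \sum_y (y == x)%:R * F y = F x.
Proof.
by rewrite (bigD1 x) //= eqxx mul1r big1 ?addr0 // => y /negbTE ->; rewrite mul0r.
Qed.

Section Qubits.
Variable R : realType.
Local Notation C := R[i].

Lemma adjE m n (A : 'M[C]_(m, n)) i j : adj A i j = (A j i)^*.
Proof. by rewrite !mxE. Qed.

Lemma adjM m n p (A : 'M[C]_(m, n)) (B : 'M[C]_(n, p)) : adj (A *m B) = adj B *m adj A.
Proof. by rewrite /adj map_mxM trmx_mul. Qed.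

Lemma adjK m n (A : 'M[C]_(m, n)) : adj (adj A) = A.
Proof. by apply/matrixP => i j; rewrite !adjE conjCK. Qed.

Lemma sum_prod_qbit n (f : nat -> 'I_2 -> C) :
  \sum_(i < 2 ^ n) \prod_(k < n) f k (qbit k i) = \prod_(k < n) \sum_(b < 2) f k b.
Proof.
rewrite (sum_prod_bits n (fun k b => f k (inord b))).
apply: eq_bigr => k _; rewrite big_ord_recr big_ord1 /=.
by congr (f k _ + f k _); apply: val_inj; rewrite /= inordK.
Qed.

Lemma qbit_inj n (i j : 'I_(2 ^ n)) : (forall k : 'I_n, qbit k i = qbit k j) -> i = j.
Proof.
move=> eq_qbit; apply/val_inj/(eq_from_bits (ltn_ord i) (ltn_ord j)) => k lt_k.
move/(congr1 val): (eq_qbit (Ordinal lt_k)); rewrite /= !inordK ?ltnS ?leq_b1 //.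
by case: odd; case: odd.
Qed.

Definition tens_vec n (psi : 'cV[C]_2) : 'cV[C]_(2 ^ n) :=
  \col_i \prod_(k < n) psi (qbit k i) 0.

Lemma tens_pow_outer n (psi : 'cV[C]_2) :
  tens_pow n (psi *m adj psi) = tens_vec n psi *m adj (tens_vec n psi).
Proof.
apply/matrixP => i j; rewrite !mxE big_ord1 adjE !mxE rmorph_prod -big_split.
by apply: eq_bigr => k _; rewrite mxE big_ord1 adjE.
Qed.

Lemma adj_mul_col d (u : 'cV[C]_d) : adj u *m u = (\sum_i u i 0 * (u i 0)^*)%:M.
Proof.
apply/matrixP => a b; rewrite !ord1 !mxE /= mulr1n.
by apply: eq_bigr => i _; rewrite adjE mulrC.
Qed.

Lemma sum_mul_conj_unit d (u : 'cV[C]_d) :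
  adj u *m u = 1%:M -> \sum_i u i 0 * (u i 0)^* = 1.
Proof. by rewrite adj_mul_col => /matrixP/(_ 0 0); rewrite !mxE /= !mulr1n. Qed.

Lemma tens_vec_unit n (psi : 'cV[C]_2) :
  adj psi *m psi = 1%:M -> adj (tens_vec n psi) *m tens_vec n psi = 1%:M.
Proof.
move=> /sum_mul_conj_unit psi_unit; rewrite adj_mul_col; congr scalar_mx.
under eq_bigr do rewrite mxE rmorph_prod -big_split /=.
by rewrite (sum_prod_qbit n (fun _ b => psi b 0 * (psi b 0)^*)) big1 // => k _; rewrite psi_unit.
Qed.

Lemma quad_form_outer d (u v : 'cV[C]_d) :
  (adj v *m (u *m adj u) *m v) 0 0 = (adj v *m u) 0 0 * ((adj v *m u) 0 0)^*.
Proof.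
rewrite mulmxA -mulmxA mxE big_ord1.
have -> : adj u *m v = adj (adj v *m u) by rewrite adjM adjK.
by rewrite adjE.
Qed.

Lemma psd_outer d (u : 'cV[C]_d) : psd (u *m adj u).
Proof. by move=> v; rewrite quad_form_outer mul_conjC_ge0. Qed.

Lemma density_outer d (u : 'cV[C]_d) : adj u *m u = 1%:M -> density (u *m adj u).
Proof.
by move=> u_unit; split; [exact: psd_outer | rewrite mxtrace_mulC u_unit mxtrace1].
Qed.

Lemma density_tens_pow n (psi : 'cV[C]_2) :
  adj psi *m psi = 1%:M -> density (tens_pow n (psi *m adj psi)).
Proof. by move=> psi_unit; rewrite tens_pow_outer; apply/density_outer/tens_vec_unit. Qed.

Lemma inv_sqrt2_mul_conj :
  ((Num.sqrt (2 : R))^-1)%:C%C * (((Num.sqrt (2 : R))^-1)%:C%C)^* = 2^-1 :> C.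
Proof.
rewrite conj_Creal ?complex_real // -rmorphM /= -expr2 exprVn sqr_sqrtr ?ler0n //.
by rewrite fmorphV /= rmorph_nat.
Qed.

Lemma expr_inv2C k : (2^-1 : C) ^+ k = ((2^-1 : R) ^+ k)%:C%C.
Proof. by rewrite rmorphXn /= fmorphV /= rmorph_nat. Qed.

Lemma tens_pow_phi2_entry m i j : tens_pow m (phi2_proj R) i j = 2^-1 ^+ m.
Proof.
rewrite mxE (eq_bigr (fun=> 2^-1)) ?prodr_const ?card_ord // => k _.
by rewrite mxE big_ord1 adjE !mxE inv_sqrt2_mul_conj.
Qed.

Lemma tr_tens_phi2_mul m (X : 'M[C]_(2 ^ m)) :
  \tr (tens_pow m (phi2_proj R) *m X) = 2^-1 ^+ m * \sum_i \sum_j X i j.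
Proof.
rewrite exchange_big mulr_sumr; apply: eq_bigr => i _.
by rewrite mxE mulr_sumr; apply: eq_bigr => j _; rewrite tens_pow_phi2_entry.
Qed.

End Qubits.

Section IncoherentOperations.
Variable R : realType.
Local Notation C := R[i].

Lemma psd_diag d (D : 'M[C]_d) : is_diag_mx D -> (forall i, 0 <= D i i) -> psd D.
Proof.
move=> /is_diag_mxP D_diag D_ge0 v; rewrite mxE; apply: sumr_ge0 => j _.
rewrite mxE (bigD1 j) //= big1 ?addr0 => [|i ij]; last by rewrite D_diag ?mulr0.
by rewrite adjE mulrAC mulr_ge0 // mulrC mul_conjC_ge0.
Qed.

Lemma psd_ge0_diag d (A : 'M[C]_d) i : psd A -> 0 <= A i i.
Proof.
move=> /(_ (delta_mx i 0)).
have -> : adj (delta_mx i 0 : 'cV[C]_d) = delta_mx 0 i.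
  by apply/matrixP => a b; rewrite adjE !mxE andbC; case: (_ && _); rewrite ?conjC1 ?conjC0.
by rewrite -rowE -colE !mxE.
Qed.

Lemma conj_diag_mxE d d' (K : 'M[C]_(d', d)) (s : 'M[C]_d) j j' : is_diag_mx s ->
  (K *m s *m adj K) j j' = \sum_i s i i * (K j i * (K j' i)^*).
Proof.
move=> /is_diag_mxP s_diag; rewrite mxE; apply: eq_bigr => i _.
rewrite mxE (bigD1 i) //= big1 ?addr0 => [|l li]; last by rewrite s_diag ?mulr0 // eq_sym.
by rewrite adjE mulrAC mulrC mulrA.
Qed.

Lemma diag_ge0_tr_eq0 d (X : 'M[C]_d) : is_diag_mx X -> (forall j, 0 <= X j j) ->
  \tr X = 0 -> X = 0.
Proof.
move=> /is_diag_mxP X_diag X_ge0 /psumr_eq0P X0.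
apply/matrixP => j j'; rewrite mxE.
by have [<-|/X_diag->//] := eqVneq j j'; apply: X0.
Qed.

Lemma incoherent_state_diag_delta d (i : 'I_d) :
  incoherent_state (diag_mx (delta_mx 0 i) : 'M[C]_d).
Proof.
split; last exact: diag_mx_is_diag.
split; last first.
  by rewrite mxtrace_diag (bigD1 i) //= big1 => [|j /negbTE ji]; rewrite mxE ?ji ?eqxx ?addr0.
by apply: psd_diag => [|j]; rewrite ?diag_mx_is_diag // !mxE mulrn_wge0 ?ler0n.
Qed.

Lemma diag_ge0_scale_incoherent d (X : 'M[C]_d) : (0 < d)%N -> is_diag_mx X ->
  (forall j, 0 <= X j j) -> exists c t, incoherent_state t /\ X = c *: t.
Proof.
move=> d_gt0 X_diag X_ge0.
have [trX0|trX_neq0] := eqVneq (\tr X) 0.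
  exists 0, (diag_mx (delta_mx 0 (Ordinal d_gt0))).
  by rewrite scale0r (diag_ge0_tr_eq0 X_diag X_ge0 trX0); split; first exact: incoherent_state_diag_delta.
have trX_gt0 : 0 < \tr X by rewrite lt_def trX_neq0 sumr_ge0.
exists (\tr X), ((\tr X)^-1 *: X); rewrite scalerA divff // scale1r.
have Xn_diag : is_diag_mx ((\tr X)^-1 *: X).
  by apply/is_diag_mxP => a b ab; rewrite mxE (is_diag_mxP X_diag) ?mulr0.
do 2!split=> //; split; last by rewrite mxtraceZ mulVf.
by apply: psd_diag => // j; rewrite mxE mulr_ge0 ?invr_ge0 ?(ltW trX_gt0).
Qed.

Lemma incoherent_kraus_col_support d d' (K : 'M[C]_(d', d)) : (0 < d')%N ->
  (forall i j j', j != j' -> K j i * (K j' i)^* = 0) -> incoherent_kraus K.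
Proof.
move=> d'_gt0 K_col s [[s_psd _] s_diag]; apply: diag_ge0_scale_incoherent => //.
  apply/is_diag_mxP => j j' jj'; rewrite conj_diag_mxE //.
  by apply: big1 => i _; rewrite K_col ?mulr0.
move=> j; rewrite conj_diag_mxE //; apply: sumr_ge0 => i _.
by rewrite mulr_ge0 ?mul_conjC_ge0 ?psd_ge0_diag.
Qed.

Lemma apply_kraus_tr d d' (ks : seq 'M[C]_(d', d)) (A : 'M[C]_d) :
  \sum_(K <- ks) adj K *m K = 1%:M -> \tr (apply_kraus ks A) = \tr A.
Proof.
move=> ks_complete; rewrite raddf_sum /=.
under eq_bigr do rewrite mxtrace_mulC mulmxA.
by rewrite -raddf_sum /= -mulmx_suml ks_complete mul1mx.
Qed.

Lemma apply_kraus_diag d d' (ks : seq 'M[C]_(d', d)) s :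
  (forall K, K \in ks -> incoherent_kraus K) -> incoherent_state s ->
  is_diag_mx (apply_kraus ks s).
Proof.
move=> ks_incoh s_incoh; rewrite /apply_kraus big_seq.
apply: (big_rec (fun A => is_diag_mx A)) => [|K A K_ks A_diag].
  exact: mx0_is_diag.
have [c [t [[_ t_diag] ->]]] := ks_incoh K K_ks s s_incoh.
apply/is_diag_mxP => i j ij.
by rewrite !mxE (is_diag_mxP t_diag) // (is_diag_mxP A_diag) // mulr0 add0r.
Qed.

Lemma sum_diag_entries d (D : 'M[C]_d) : is_diag_mx D -> \sum_i \sum_j D i j = \tr D.
Proof.
move=> /is_diag_mxP D_diag; apply: eq_bigr => i _.
by rewrite (bigD1 i) //= big1 ?addr0 // => j ji; rewrite D_diag // eq_sym.
Qed.

Lemma fidelity_incoherent n m (rho : 'M[C]_2) (L : seq 'M[C]_(2 ^ m, 2 ^ n)) :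
  incoherent_state (tens_pow n rho) -> incoherent_operation L ->
  \tr (tens_pow m (phi2_proj R) *m apply_kraus L (tens_pow n rho)) = 2^-1 ^+ m.
Proof.
move=> rho_incoh [L_complete L_incoh].
rewrite tr_tens_phi2_mul sum_diag_entries ?apply_kraus_diag //.
by rewrite apply_kraus_tr // rho_incoh.1.2 mulr1.
Qed.

End IncoherentOperations.

Section NoDistillation.
Variable R : realType.
Local Notation C := R[i].

Lemma diag_tens_pow_basis n (psi : 'cV[C]_2) (b : 'I_2) :
  psi b 0 = 0 -> is_diag_mx (tens_pow n (psi *m adj psi)).
Proof.
move=> psi_b; rewrite tens_pow_outer; apply/is_diag_mxP => i j.
rewrite mxE big_ord1 adjE !mxE; apply: contraTeq; rewrite negbK.
rewrite mulf_eq0 conjC_eq0 negb_or => /andP[/prodf_neq0 nz_i /prodf_neq0 nz_j].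
apply/eqP; congr val; apply: qbit_inj => k.
have off_b x : psi x 0 != 0 -> x != b by apply: contraNneq => ->; rewrite psi_b.
by apply: ord2_eq_of_neq; apply: off_b; [apply: nz_i | apply: nz_j].
Qed.

Lemma incoherent_tens_pow_basis n (psi : 'cV[C]_2) (b : 'I_2) :
  adj psi *m psi = 1%:M -> psi b 0 = 0 -> incoherent_state (tens_pow n (psi *m adj psi)).
Proof. by move=> psi_unit psi_b; split; [apply: density_tens_pow | apply: diag_tens_pow_basis psi_b]. Qed.

Lemma near_eq0_of_cvg_inv2 (m : nat -> nat) :
  (fun n => 1 - (2^-1 : R) ^+ m n) @ \oo --> 0 -> \forall n \near \oo, m n = 0%N.
Proof.
move/cvgrPdist_lt => /(_ 2^-1); rewrite invr_gt0 ltr0n => /(_ isT).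
apply: filterS => n; rewrite sub0r normrN; case: (m n) => // k.
have pow_le1 : (2^-1 : R) ^+ k <= 1 by rewrite exprn_ile1 ?invr_ge0 ?invf_le1 ?ler1n.
rewrite exprS => /(le_lt_trans (ler_norm _)) lt_half.
by exfalso; lra.
Qed.

Lemma achievable_rate_incoherent (rho : 'M[C]_2) r :
  (forall n, incoherent_state (tens_pow n rho)) -> achievable_rate rho r -> r = 0.
Proof.
move=> rho_incoh [m [L [L_incoh [rate_cvg fid_cvg]]]].
move: fid_cvg; under eq_fun do rewrite fidelity_incoherent // expr_inv2C /=.
move=> /near_eq0_of_cvg_inv2 m_eq0.
have rate0 : (fun n => (m n)%:R / n%:R : R) @ \oo --> (0 : R).
  by apply: cvg_near_cst; apply: filterS m_eq0 => n ->; rewrite mul0r.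
exact: (cvg_unique _ rate_cvg rate0).
Qed.

Lemma not_distillable_incoherent (rho : 'M[C]_2) :
  (forall n, incoherent_state (tens_pow n rho)) -> ~ distillable rho.
Proof.
move=> rho_incoh; apply/negP; rewrite -leNgt.
apply: ge_ereal_sup => _ [r r_rate <-].
by rewrite (achievable_rate_incoherent rho_incoh r_rate).
Qed.

End NoDistillation.

Section Routing.
Variable R : realType.
Local Notation C := R[i].

Lemma sum_const_mul_conj (T : finType) (P : pred T) (f : T -> C) :
  {in P &, forall i i', f i = f i'} ->
  (\sum_(i | P i) f i) * (\sum_(i | P i) f i)^* = #|P|%:R * \sum_(i | P i) f i * (f i)^*.
Proof.
move=> f_const; case: (pickP P) => [x Px|P0]; last first.
  by rewrite !big_pred0 ?mul0r ?mulr0 // => i; rewrite -topredE /= P0.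
rewrite (eq_bigr (fun=> f x)) => [|i Pi]; last exact: f_const.
rewrite [in RHS](eq_bigr (fun=> f x * (f x)^*)) => [|i Pi]; last by rewrite (f_const i x).
by rewrite !sumr_const rmorphMn /= !mulrnAl !mulrnAr mul1r.
Qed.

Lemma sum_entries_conj_outer d1 d2 (K : 'M[C]_(d1, d2)) (u : 'cV[C]_d2) :
  \sum_i \sum_j (K *m (u *m adj u) *m adj K) i j =
  (\sum_i (K *m u) i 0) * (\sum_i (K *m u) i 0)^*.
Proof.
rewrite mulmxA -mulmxA -adjM rmorph_sum big_distrl /=; apply: eq_bigr => i _.
by rewrite big_distrr /=; apply: eq_bigr => j _; rewrite mxE big_ord1 adjE.
Qed.

Variables (d d' : nat) (A : finType) (e : 'I_d -> A * 'I_d').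

Definition route_kraus (a : A) : 'M[C]_(d', d) := \matrix_(j, i) (e i == (a, j))%:R.

Definition route_op : seq 'M[C]_(d', d) := [seq route_kraus a | a <- index_enum A].

Hypothesis e_inj : injective e.

Lemma route_op_complete : \sum_(K <- route_op) adj K *m K = 1%:M.
Proof.
apply/matrixP => i i'; rewrite big_map summxE.
under eq_bigr do rewrite mxE; rewrite pair_big /=.
under eq_bigr => p _ do rewrite adjE !mxE conjC_nat -surjective_pairing eq_sym.
by rewrite sum_eq_natr_mul mxE (inj_eq e_inj) eq_sym.
Qed.

Lemma route_op_incoherent : (0 < d')%N -> incoherent_operation route_op.
Proof.
move=> d'_gt0; split; first exact: route_op_complete.
move=> _ /mapP[a _ ->]; apply: incoherent_kraus_col_support d'_gt0 _ => i j j' jj'.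
rewrite !mxE conjC_nat -natrM; case: eqP => [-> /=|]; last by rewrite mul0n.
by rewrite xpair_eqE eqxx (negbTE jj').
Qed.

Lemma sum_route_kraus_mul a (u : 'cV[C]_d) :
  \sum_j (route_kraus a *m u) j 0 = \sum_(i | (e i).1 == a) u i 0.
Proof.
rewrite (partition_big (fun i => (e i).2) predT) //=; apply: eq_bigr => j _.
rewrite mxE [RHS]big_mkcond; apply: eq_bigr => i _; rewrite mxE.
by case: (e i) => a' j'; rewrite xpair_eqE; case: ifP; rewrite ?mul1r ?mul0r.
Qed.

Lemma route_op_sum_entries (u : 'cV[C]_d) :
  \sum_i \sum_j apply_kraus route_op (u *m adj u) i j =
  \sum_a (\sum_(i | (e i).1 == a) u i 0) * (\sum_(i | (e i).1 == a) u i 0)^*.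
Proof.
rewrite /apply_kraus big_map; transitivity (\sum_a \sum_i \sum_j
    (route_kraus a *m (u *m adj u) *m adj (route_kraus a)) i j).
  rewrite [RHS]exchange_big; apply: eq_bigr => i _.
  by rewrite [RHS]exchange_big; apply: eq_bigr => j _; rewrite summxE.
by apply: eq_bigr => a _; rewrite sum_entries_conj_outer sum_route_kraus_mul.
Qed.

End Routing.

Section Protocol.
Variable R : realType.
Local Notation C := R[i].
Variables n m : nat.
Local Notation D := (2 ^ n)%N.
Local Notation M := (2 ^ m)%N.

Definition weight (i : 'I_D) : nat := #|[pred k : 'I_n | qbit k i != 0]|.

Definition weight_class (w : nat) : seq 'I_D := [seq j <- enum 'I_D | weight j == w].

Definition class_rank (i : 'I_D) : nat := index i (weight_class (weight i)).

Lemma weight_lt i : (weight i < n.+1)%N.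
Proof. by rewrite ltnS -[X in (_ <= X)%N](card_ord n) max_card. Qed.

Lemma mem_weight_class i : i \in weight_class (weight i).
Proof. by rewrite mem_filter eqxx mem_enum. Qed.

Lemma class_rank_lt i : (class_rank i < size (weight_class (weight i)))%N.
Proof. by rewrite index_mem mem_weight_class. Qed.

Lemma size_weight_class w : (size (weight_class w) <= D)%N.
Proof. by rewrite size_filter -[X in (_ <= X)%N](size_enum_ord D) count_size. Qed.

Lemma class_rank_inj i i' : weight i = weight i' -> class_rank i = class_rank i' -> i = i'.
Proof.
move=> eq_w; rewrite /class_rank eq_w => eq_r.
by rewrite -(nth_index i (mem_weight_class i)) eq_w eq_r nth_index ?mem_weight_class.
Qed.

Lemma nth_weight_class (x0 : 'I_D) w t : (t < size (weight_class w))%N ->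
  weight (nth x0 (weight_class w) t) = w /\ class_rank (nth x0 (weight_class w) t) = t.
Proof.
move=> t_lt; have := mem_nth x0 t_lt; rewrite {1}mem_filter => /andP[/eqP w_x _].
by split=> //; rewrite /class_rank w_x index_uniq // filter_uniq ?enum_uniq.
Qed.

Lemma chunk_lt i : (class_rank i %/ M < D)%N.
Proof. exact: leq_ltn_trans (leq_div _ _) (leq_trans (class_rank_lt i) (size_weight_class _)). Qed.

(* A string goes to the Kraus operator of its chunk (its weight and the block of
   M consecutive ranks containing it) and to the output basis state given by its
   offset in that block. *)
Definition chunk_route (i : 'I_D) : ('I_n.+1 * 'I_D) * 'I_M :=
  ((Ordinal (weight_lt i), Ordinal (chunk_lt i)),
   Ordinal (ltn_pmod (class_rank i) (expn2_gt0 m))).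

Lemma mem_chunk a i :
  ((chunk_route i).1 == a) = (weight i == a.1) && (class_rank i %/ M == a.2)%N.
Proof. by case: a => w c; rewrite xpair_eqE -!val_eqE. Qed.

Lemma chunk_route_inj : injective chunk_route.
Proof.
move=> i i' [eq_w eq_c eq_o].
by apply: class_rank_inj; rewrite // (divn_eq (class_rank i) M) eq_c eq_o -divn_eq.
Qed.

Definition full_chunk (w c : nat) : bool := (c.+1 * M <= size (weight_class w))%N.

Definition in_full_chunk (i : 'I_D) : bool := full_chunk (weight i) (class_rank i %/ M).

Lemma in_full_chunkE i a :
  (chunk_route i).1 == a -> in_full_chunk i = full_chunk a.1 a.2.
Proof. by rewrite mem_chunk => /andP[/eqP<- /eqP<-]. Qed.

Lemma card_chunk_le a : (#|[pred i | (chunk_route i).1 == a]| <= M)%N.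
Proof.
suff /leq_card_in : {in [pred i | (chunk_route i).1 == a] &,
    injective (fun i => (chunk_route i).2)} by rewrite card_ord.
move=> i i'; rewrite !inE => /eqP ei /eqP ei' eq_o; apply: chunk_route_inj.
by rewrite [chunk_route i]surjective_pairing [chunk_route i']surjective_pairing ei ei' eq_o.
Qed.

Lemma card_chunk_full (a : 'I_n.+1 * 'I_D) :
  full_chunk a.1 a.2 -> #|[pred i | (chunk_route i).1 == a]| = M.
Proof.
move=> full_a; apply/eqP; rewrite eqn_leq card_chunk_le /=.
pose f (j : 'I_M) := nth (Ordinal (expn2_gt0 n)) (weight_class a.1) (a.2 * M + j).
have f_lt (j : 'I_M) : (a.2 * M + j < size (weight_class a.1))%N.
  by apply: leq_trans full_a; rewrite mulSn addnC ltn_add2r.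
have f_inj : injective f.
  move=> j j' /(congr1 class_rank); rewrite /f.
  by rewrite (nth_weight_class _ (f_lt j)).2 (nth_weight_class _ (f_lt j')).2 => /addnI/val_inj.
rewrite -[X in (X <= _)%N]card_ord -(card_imset _ f_inj).
apply/subset_leq_card/fintype.subsetP => _ /imsetP[j _ ->].
have [w_f r_f] := nth_weight_class (Ordinal (expn2_gt0 n)) (f_lt j).
by rewrite inE mem_chunk /f w_f r_f divnMDl ?expn2_gt0 // divn_small ?addn0 ?eqxx.
Qed.

Variable psi : 'cV[C]_2.
Local Notation Psi := (tens_vec n psi).

Lemma tens_vec_weight i : Psi i 0 = psi 0 0 ^+ (n - weight i) * psi 1 0 ^+ weight i.
Proof.
rewrite mxE (bigID (fun k : 'I_n => qbit k i == 0)) /=.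
rewrite (eq_bigr (fun=> psi 0 0)) => [|k /eqP-> //].
rewrite [X in _ * X](eq_bigr (fun=> psi 1 0)) => [|k k_neq0]; last first.
  by rewrite (@ord2_eq_of_neq 0 _ 1 k_neq0).
rewrite !prodr_const; congr (_ ^+ _ * _).
have card_n := cardC [pred k : 'I_n | qbit k i == 0]; rewrite card_ord in card_n.
by apply: (@addIn (weight i)); rewrite subnK -1?ltnS ?weight_lt.
Qed.

Definition leftover_weight : C :=
  \sum_(i | ~~ in_full_chunk i) Psi i 0 * (Psi i 0)^*.

Lemma protocol_fidelityE :
  \tr (tens_pow m (phi2_proj R) *m
       apply_kraus (route_op R chunk_route) (tens_pow n (psi *m adj psi))) =
  2^-1 ^+ m * \sum_a #|[pred i | (chunk_route i).1 == a]|%:R *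
                 \sum_(i | (chunk_route i).1 == a) Psi i 0 * (Psi i 0)^*.
Proof.
rewrite tr_tens_phi2_mul tens_pow_outer route_op_sum_entries; congr (_ * _).
apply: eq_bigr => a _; apply: sum_const_mul_conj => i i'.
rewrite -!topredE /= !mem_chunk => /andP[/eqP w_i _] /andP[/eqP w_i' _].
by rewrite !tens_vec_weight w_i w_i'.
Qed.

Lemma sum_chunks (f : 'I_D -> C) :
  \sum_a \sum_(i | (chunk_route i).1 == a) f i = \sum_i f i.
Proof. by rewrite (partition_big (fun i => (chunk_route i).1) predT). Qed.

Hypothesis psi_unit : adj psi *m psi = 1%:M.

Let sum_sqr_Psi : \sum_i Psi i 0 * (Psi i 0)^* = 1.
Proof. exact/sum_mul_conj_unit/tens_vec_unit. Qed.

Let inv2_expM : 2^-1 ^+ m * M%:R = 1 :> C.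
Proof. by rewrite natrX -exprMn mulVf ?expr1n ?pnatr_eq0. Qed.

Lemma protocol_fidelity_le1 :
  \tr (tens_pow m (phi2_proj R) *m
       apply_kraus (route_op R chunk_route) (tens_pow n (psi *m adj psi))) <= 1.
Proof.
rewrite protocol_fidelityE; apply: (@le_trans _ _
  (2^-1 ^+ m * \sum_a M%:R * \sum_(i | (chunk_route i).1 == a) Psi i 0 * (Psi i 0)^*)).
  rewrite ler_pM2l ?exprn_gt0 ?invr_gt0 ?ltr0n //; apply: ler_sum => a _.
  by rewrite ler_wpM2r ?ler_nat ?card_chunk_le ?sumr_ge0 // => i _; apply: mul_conjC_ge0.
by rewrite -mulr_sumr sum_chunks sum_sqr_Psi mulr1 inv2_expM.
Qed.

Lemma protocol_fidelity_ge :
  1 - leftover_weight <= \tr (tens_pow m (phi2_proj R) *m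
       apply_kraus (route_op R chunk_route) (tens_pow n (psi *m adj psi))).
Proof.
have -> : 1 - leftover_weight = \sum_(i | in_full_chunk i) Psi i 0 * (Psi i 0)^*.
  by rewrite -sum_sqr_Psi (bigID in_full_chunk) /= addrK.
rewrite protocol_fidelityE; apply: (@le_trans _ _
  (2^-1 ^+ m * (M%:R * \sum_(i | in_full_chunk i) Psi i 0 * (Psi i 0)^*))).
  by rewrite mulrA inv2_expM mul1r.
rewrite ler_pM2l ?exprn_gt0 ?invr_gt0 ?ltr0n //.
rewrite (partition_big (fun i => (chunk_route i).1) predT) //= mulr_sumr.
apply: ler_sum => a _; have [full_a|not_full_a] := boolP (full_chunk a.1 a.2).
  rewrite card_chunk_full // (eq_bigl (fun i => (chunk_route i).1 == a)) // => i.
  by apply/andb_idl => /in_full_chunkE->.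
rewrite big_pred0 ?mulr0 => [|i]; last first.
  by apply/negbTE; rewrite negb_and orbC; case: (boolP (_ == a)) => //= /in_full_chunkE->.
by rewrite mulr_ge0 ?ler0n ?sumr_ge0 // => i _; apply: mul_conjC_ge0.
Qed.

Lemma last_chunk_rank i : ~~ in_full_chunk i ->
  (class_rank i %/ M = size (weight_class (weight i)) %/ M)%N.
Proof.
rewrite /in_full_chunk /full_chunk -ltnNge -ltn_divLR ?expn2_gt0 // ltnS => le_size.
by apply/eqP; rewrite eqn_leq le_size leq_div2r // ltnW // class_rank_lt.
Qed.

Lemma card_not_in_full_chunk : (#|[pred i | ~~ in_full_chunk i]| <= n.+1 * M)%N.
Proof.
suff /leq_card_in : {in [pred i | ~~ in_full_chunk i] &,
    injective (fun i => ((chunk_route i).1.1, (chunk_route i).2))}.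
  by rewrite card_prod !card_ord.
move=> i i'; rewrite !inE => /last_chunk_rank r_i /last_chunk_rank r_i'.
move=> [eq_w eq_o]; apply: class_rank_inj => //.
by rewrite (divn_eq (class_rank i) M) (divn_eq (class_rank i') M) r_i r_i' eq_w eq_o.
Qed.

Lemma leftover_weight_le (p : R) : (forall b, psi b 0 * (psi b 0)^* <= p%:C%C) ->
  leftover_weight <= (p ^+ n * (n.+1 * M)%:R)%:C%C.
Proof.
move=> psi_le; have p_ge0 : 0 <= p%:C%C := le_trans (mul_conjC_ge0 _) (psi_le 0).
have Psi_le i : Psi i 0 * (Psi i 0)^* <= p%:C%C ^+ n.
  rewrite mxE rmorph_prod -big_split -[n in _ ^+ n]card_ord -prodr_const /=.
  by apply: ler_prod => k _; rewrite mul_conjC_ge0 psi_le.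
apply: le_trans (ler_sum _ (fun i _ => Psi_le i)) _.
rewrite sumr_const rmorphM rmorphXn rmorph_nat /= -[leLHS]mulr_natr.
by rewrite ler_wpM2l ?exprn_ge0 // ler_nat; apply: card_not_in_full_chunk.
Qed.

Lemma protocol_infidelity_le (p : R) : (forall b, psi b 0 * (psi b 0)^* <= p%:C%C) ->
  `|1 - complex.Re (\tr (tens_pow m (phi2_proj R) *m
       apply_kraus (route_op R chunk_route) (tens_pow n (psi *m adj psi))))|
  <= p ^+ n * (n.+1 * M)%:R.
Proof.
move=> psi_le; have := leftover_weight_le psi_le.
have := protocol_fidelity_ge; have := protocol_fidelity_le1.
move: (\tr _) leftover_weight => [f1 f2] [b1 b2].
rewrite !lecE /= => /andP[_ f_le1] /andP[_ f_ge] /andP[_ b_le].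
rewrite ger0_norm; lra.
Qed.

End Protocol.

Section CoherenceFraction.
Variable R : realType.
Local Notation C := R[i].

Lemma expi_mul_conj (t : R) : expi t * (expi t)^* = 1.
Proof. by rewrite -normCK normc_def /= cos2Dsin2 sqrtr1 expr1n. Qed.

Lemma exists_phases_Re_gt0 (w : C) : w != 0 -> exists t0 t1 : R,
  [/\ t0 \in `[0, 2 * pi]%R, t1 \in `[0, 2 * pi]%R &
      0 < complex.Re ((expi t0)^* * expi t1 * w)].
Proof.
move=> w_neq0; have pi_gt0 := pi_gt0 R.
have e0 : expi 0 = 1 :> C by rewrite /expi cos0 sin0.
have e_pi : expi pi = - 1 :> C.
  by apply/eqP; rewrite /expi cospi sinpi eq_complex /= oppr0 !eqxx.
have e_half : expi (pi / 2 : R) = 'i%C by rewrite /expi cos_pihalf sin_pihalf.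
have [in_0 in_pi in_half] : [/\ (0 : R) \in `[0, 2 * pi]%R, (pi : R) \in `[0, 2 * pi]%R
  & (pi / 2 : R) \in `[0, 2 * pi]%R] by split; rewrite in_itv /=; apply/andP; split; lra.
case: w w_neq0 => x y w_neq0.
have [x_gt0|x_lt0|x0] := ltgtP 0 x.
- by exists 0, 0; split=> //; rewrite e0 conjC1 !mul1r /=.
- by exists 0, pi; split=> //; rewrite e0 e_pi conjC1 mul1r mulN1r /= oppr_gt0.
have [y_gt0|y_lt0|y0] := ltgtP 0 y; last by rewrite -x0 -y0 eqxx in w_neq0.
- by exists (pi / 2), 0; split=> //; rewrite e_half e0 mulr1 /=; lra.
- by exists 0, (pi / 2); split=> //; rewrite e_half e0 conjC1 mul1r /=; lra.
Qed.

Variable psi : 'cV[C]_2.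
Hypothesis psi_unit : adj psi *m psi = 1%:M.

Local Notation overlap t0 t1 :=
  ((adj (max_coh t0 t1) *m (psi *m adj psi) *m max_coh t0 t1) 0 0).

Let norm_psi : psi 0 0 * (psi 0 0)^* + psi 1 0 * (psi 1 0)^* = 1.
Proof. by have := sum_mul_conj_unit psi_unit; rewrite sum_ord2. Qed.

Lemma max_coh_overlapE t0 t1 :
  overlap t0 t1 = 2^-1 + 'Re ((expi t0)^* * expi t1 * (psi 0 0 * (psi 1 0)^*)).
Proof.
rewrite quad_form_outer mxE !sum_ord2 !adjE !mxE /= ReE.
set s := ((Num.sqrt (2 : R))^-1)%:C%C; set z := _ * _ * _.
transitivity ((s * s^*) * ((expi t0 * (expi t0)^*) * (psi 0 0 * (psi 0 0)^*) +
  (expi t1 * (expi t1)^*) * (psi 1 0 * (psi 1 0)^*) + (z + z^*))).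
  by rewrite /z !(rmorphD, rmorphM) /= !conjCK; ring.
by rewrite inv_sqrt2_mul_conj !expi_mul_conj !mul1r norm_psi; field.
Qed.

Lemma max_coh_overlap_Re t0 t1 : complex.Re (overlap t0 t1) =
  2^-1 + complex.Re ((expi t0)^* * expi t1 * (psi 0 0 * (psi 1 0)^*)).
Proof.
apply: complexI; rewrite RRe_real; last first.
  by rewrite max_coh_overlapE rpredD ?Creal_Re // rpredV rpred_nat.
by rewrite max_coh_overlapE rmorphD /= complexRe fmorphV /= rmorph_nat.
Qed.

Lemma max_coh_overlap_Re_le t0 t1 : complex.Re (overlap t0 t1) <= 2^-1 + 1.
Proof.
rewrite max_coh_overlap_Re lerD2l -lecR complexRe; set z := _ * _ * _.
apply: le_trans (leif_Re_Creal z).1 _; rewrite -(expr_le1 (n := 2)) // normCK.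
have -> : z * z^* = (expi t0 * (expi t0)^*) * (expi t1 * (expi t1)^*) *
    ((psi 0 0 * (psi 0 0)^*) * (psi 1 0 * (psi 1 0)^*)).
  by rewrite /z !rmorphM /= !conjCK; ring.
rewrite !expi_mul_conj !mul1r mulr_ile1 ?mul_conjC_ge0 // -norm_psi.
  by rewrite lerDl mul_conjC_ge0.
by rewrite lerDr mul_conjC_ge0.
Qed.

Lemma coherence_fraction_le_half (b : 'I_2) :
  psi b 0 = 0 -> coherence_fraction (psi *m adj psi) <= 2^-1.
Proof.
move=> psi_b; have w0 : psi 0 0 * (psi 1 0)^* = 0.
  by case: (ord2_cases b) psi_b => -> ->; rewrite ?conjC0 ?mulr0 ?mul0r.
apply: ge_sup => [|_ [t0 [t1 [_ [_ ->]]]]]; last by rewrite max_coh_overlap_Re w0 mulr0 /= addr0.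
have zero_in : (0 : R) \in `[0, 2 * pi]%R by rewrite in_itv /= lexx mulr_ge0 ?ler0n ?pi_ge0.
by exists (complex.Re (overlap 0 0)), 0, 0.
Qed.

Lemma coherence_fraction_gt_half :
  psi 0 0 != 0 -> psi 1 0 != 0 -> 2^-1 < coherence_fraction (psi *m adj psi).
Proof.
move=> a_neq0 b_neq0; have w_neq0 : psi 0 0 * (psi 1 0)^* != 0 by rewrite mulf_neq0 ?conjC_eq0.
have [t0 [t1 [t0_in t1_in Re_gt0]]] := exists_phases_Re_gt0 w_neq0.
apply: (@lt_le_trans _ _ (complex.Re (overlap t0 t1))); first by rewrite max_coh_overlap_Re ltrDl.
apply: ub_le_sup; last by exists t0, t1.
by exists (2^-1 + 1) => _ [s0 [s1 [_ [_ ->]]]]; apply: max_coh_overlap_Re_le.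
Qed.

End CoherenceFraction.

Section Distillation.
Variable R : realType.
Local Notation C := R[i].

Lemma cvg_harmonic_bound (u : nat -> R) (l c : R) : 0 <= c ->
  (forall n, (0 < n)%N -> `|l - u n| <= c * harmonic n) -> u @ \oo --> l.
Proof.
move=> c_ge0 u_le; apply/cvgrPdist_lt => e e_gt0.
have /cvgrPdist_lt/(_ (e / (c + 1))) : harmonic @ \oo --> (0 : R) := cvg_harmonic.
rewrite divr_gt0 ?ltr_wpDl // => /(_ isT) h_small; near=> n.
have h_ge0 := @harmonic_ge0 R n.
have : `|0 - harmonic n| < e / (c + 1) by near: n.
rewrite sub0r normrN ger0_norm // ltr_pdivlMr ?ltr_wpDl // => h_lt.
by apply: le_lt_trans (u_le n _) _; [near: n; exists 1%N | nra].
Unshelve. all: by end_near.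
Qed.

Lemma cvg_divn_rate k : (0 < k)%N ->
  (fun n => (n %/ k)%:R / n%:R : R) @ \oo --> (k%:R^-1 : R).
Proof.
move=> k_gt0; apply: (@cvg_harmonic_bound _ _ 2) => // n n_gt0.
set q := (n %/ k)%N; set s := (n %% k)%N.
have k_pos : (0 : R) < k%:R by rewrite ltr0n.
have n_pos : (0 : R) < n%:R by rewrite ltr0n.
have s_le : (s%:R : R) <= k%:R by rewrite ler_nat ltnW // ltn_pmod.
have n_eq : (n%:R : R) = q%:R * k%:R + s%:R by rewrite -natrM -natrD -divn_eq.
have -> : (k%:R^-1 - q%:R / n%:R : R) = s%:R / (k%:R * n%:R).
  by rewrite n_eq; field; rewrite -n_eq; apply/andP; split; rewrite gt_eqF.
rewrite ger0_norm ?divr_ge0 ?mulr_ge0 ?ler0n // ler_pdivrMr ?mulr_gt0 //.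
rewrite /harmonic /= mulrAC ler_pdivlMr ?ltr0n // mulrSr.
have n_ge1 : (1 : R) <= n%:R by rewrite ler1n.
nra.
Qed.

Lemma exists_expr_le (p e : R) : 0 <= p < 1 -> 0 < e -> exists2 k, (0 < k)%N & p ^+ k <= e.
Proof.
move=> /andP[p_ge0 p_lt1] e_gt0; have p_small : `|p| < 1 by rewrite ger0_norm.
have /cvgrPdist_lt/(_ e e_gt0) [N _ pN_small] := cvg_expr p_small.
exists N.+1 => //; have := pN_small N.+1 (leqnSn N).
by rewrite /= sub0r normrN ger0_norm ?exprn_ge0 // => /ltW.
Qed.

Lemma amplitude_bound_lt1 (psi : 'cV[C]_2) : adj psi *m psi = 1%:M ->
  psi 0 0 != 0 -> psi 1 0 != 0 ->
  exists2 p : R, 0 <= p < 1 & forall b, psi b 0 * (psi b 0)^* <= p%:C%C.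
Proof.
move=> psi_unit a_neq0 b_neq0.
pose r (b : 'I_2) := complex.Re (psi b 0 * (psi b 0)^*).
have rE b : psi b 0 * (psi b 0)^* = (r b)%:C%C.
  by rewrite RRe_real // ger0_real // mul_conjC_ge0.
have r_gt0 b : psi b 0 != 0 -> 0 < r b.
  by move=> nz; rewrite -ltcR -rE lt_def mul_conjC_ge0 mulf_neq0 ?conjC_eq0.
have r_sum : r 0 + r 1 = 1.
  by have := congr1 (@complex.Re R) (sum_mul_conj_unit psi_unit); rewrite sum_ord2 !rE.
have := r_gt0 _ a_neq0; have := r_gt0 _ b_neq0 => r1_gt0 r0_gt0.
exists (Num.max (r 0) (r 1)); first by rewrite le_max gt_max; apply/andP; split; lra.
by move=> b; rewrite rE lecR; case: (ord2_cases b) => ->; rewrite le_max lexx ?orbT.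
Qed.

Lemma achievable_inv_rate (psi : 'cV[C]_2) (p : R) k :
  adj psi *m psi = 1%:M -> 0 <= p <= 1 -> (forall b, psi b 0 * (psi b 0)^* <= p%:C%C) ->
  (0 < k)%N -> p ^+ k <= 8^-1 -> achievable_rate (psi *m adj psi) k%:R^-1.
Proof.
move=> psi_unit /andP[p_ge0 p_le1] psi_le k_gt0 pk_le.
exists (fun n => (n %/ k)%N), (fun n => route_op R (@chunk_route n (n %/ k))); split.
  by move=> n; apply: route_op_incoherent; [apply: chunk_route_inj | apply: expn2_gt0].
split; first exact: cvg_divn_rate.
apply: (@cvg_harmonic_bound _ _ (2 * (k * k))%:R) => // n _.
set q := (n %/ k)%N; rewrite sub0r normrN.
apply: le_trans (protocol_infidelity_le n q psi_unit psi_le) _.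
have pn_le : p ^+ n <= 8^-1 ^+ q.
  apply: (@le_trans _ _ ((p ^+ k) ^+ q)).
    by rewrite -exprM ler_wiXn2l // mulnC leq_trunc_div.
  by rewrite lerXn2r // nnegrE ?exprn_ge0 ?invr_ge0.
apply: le_trans (ler_wpM2r (ler0n _ _) pn_le) _.
rewrite exprVn -natrX mulrC /harmonic /= ler_pdivrMr ?ltr0n ?expn_gt0 //.
by rewrite mulrAC ler_pdivlMr ?ltr0n // -!natrM ler_nat expn_poly_le_geom.
Qed.

Lemma distillable_superposition (psi : 'cV[C]_2) : adj psi *m psi = 1%:M ->
  psi 0 0 != 0 -> psi 1 0 != 0 -> distillable (psi *m adj psi).
Proof.
move=> psi_unit a_neq0 b_neq0.
have [p /andP[p_ge0 p_lt1] psi_le] := amplitude_bound_lt1 psi_unit a_neq0 b_neq0.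
have [k k_gt0 pk_le] : exists2 k, (0 < k)%N & p ^+ k <= 8^-1.
  by apply: exists_expr_le; rewrite ?p_ge0 ?invr_gt0.
apply: (@lt_le_trans _ _ (k%:R^-1)%:E); first by rewrite lte_fin invr_gt0 ltr0n.
apply: ereal_sup_ubound; exists k%:R^-1 => //.
by apply: achievable_inv_rate psi_le k_gt0 pk_le; rewrite // p_ge0 ltW.
Qed.

End Distillation.

Theorem theorem2 (R : realType) (psi : 'cV[R[i]]_2) :
  adj psi *m psi = 1%:M ->
  distillable (psi *m adj psi) <-> coherence_fraction (psi *m adj psi) > 2^-1.
Proof.
move=> psi_unit.
have basis_case (b : 'I_2) : psi b 0 = 0 ->
    ~ distillable (psi *m adj psi) /\ ~ coherence_fraction (psi *m adj psi) > 2^-1.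
  move=> psi_b; split; last by apply/negP; rewrite -leNgt (coherence_fraction_le_half psi_unit psi_b).
  by apply: not_distillable_incoherent => n; apply: incoherent_tens_pow_basis psi_b.
have [psi0|a_neq0] := eqVneq (psi 0 0) 0; first by have [] := basis_case 0 psi0; tauto.
have [psi1|b_neq0] := eqVneq (psi 1 0) 0; first by have [] := basis_case 1 psi1; tauto.
split=> _; first exact: coherence_fraction_gt_half.
exact: distillable_superposition.
Qed.
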